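(* Let $K$ be a field, $R=\bigoplus_{m\ge0}R_m$ an $\mathbb N$-graded $K$-algebra and let $A$ be a graded right double Ore extension of $R$ with generators $x_1,x_2$, relation $x_2x_1=p_{12}x_1x_2+p_{11}x_1^2+\tau_1x_1+\tau_2x_2+\tau_0$, and maps $\sigma=(\sigma_{ij})$, $\delta=(\delta_1,\delta_2)^T$. If $p_{11}=0$, $p_{12}\neq0$, $\sigma_{12}=\sigma_{21}=0$, and $\sigma_{11},\sigma_{22}$ are automorphisms of $R$, then $A$ is a graded skew PBW extension of $R$.
   Context: A $K$-algebra $B\supseteq R$ is a right double Ore extension of $R$ if: it is generated by $R$ and $x_1,x_2$; $x_2x_1=p_{12}x_1x_2+p_{11}x_1^2+\tau_1x_1+\tau_2x_2+\tau_0$ with $p_{12},p_{11}\in K$, $\tau_i\in R$; $B$ is a free left $R$-module with basis $\{x_1^ax_2^b\}_{a,b\ge0}$; and $x_1R+x_2R\subseteq Rx_1+Rx_2+R$. The maps $\sigma_{ij},\delta_i$ are defined by $x_ir=\sigma_{i1}(r)x_1+\sigma_{i2}(r)x_2+\delta_i(r)$. It is graded if all its relations are homogeneous with $\deg x_1=\deg x_2=1$. A ring $A$ is a skew PBW extension of $R$ in $x_1,\dots,x_n$ if $R\subseteq A$; $A$ is a free left $R$-module with basis the monomials $x_1^{\alpha_1}\cdots x_n^{\alpha_n}$; for each $i$ and $r\ne0$ there is $c_{i,r}\ne0$ in $R$ with $x_ir-c_{i,r}x_i\in R$; for all $i,j$ there is $c_{i,j}\in R\setminus\{0\}$ with $x_jx_i-c_{i,j}x_ix_j\in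 R+Rx_1+\cdots+Rx_n$. Then $x_ir=\sigma_i(r)x_i+\delta_i(r)$ with $\sigma_i$ an injective endomorphism and $\delta_i$ a $\sigma_i$-derivation. It is bijective if all $\sigma_i$ are bijective and all $c_{i,j}$ invertible. A graded skew PBW extension is a bijective skew PBW extension of an $\mathbb N$-graded $R$ such that each $\sigma_i$ is graded, $\delta_i(R_m)\subseteq R_{m+1}$, and $x_jx_i-c_{i,j}x_ix_j\in R_2+R_1x_1+\cdots+R_1x_n$ with $c_{i,j}\in R_0$. *)

From HB Require Import structures.
From mathcomp Require Import all_boot all_order all_algebra.
Set Implicit Arguments. Unset Strict Implicit. Unset Printing Implicit Defensive.
Import GRing.Theory.
Local Open Scope ring_scope.

Section Defs.
Variables (K : fieldType) (A : algType K).

Definition is_subalg (R : {pred A}) : Prop :=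
  [/\ forall k : K, k%:A \in R,
      forall a b, a \in R -> b \in R -> a + b \in R,
      forall a b, a \in R -> b \in R -> a * b \in R &
      forall (k : K) a, a \in R -> k *: a \in R].

Definition is_grading (R : {pred A}) (Rg : nat -> {pred A}) : Prop :=
  (forall m, {subset Rg m <= R}) /\
  (forall m, 0 \in Rg m) /\
  (forall m a b, a \in Rg m -> b \in Rg m -> a + b \in Rg m) /\
  (forall m (k : K) a, a \in Rg m -> k *: a \in Rg m) /\
  (forall m n a b, a \in Rg m -> b \in Rg n -> a * b \in Rg (m + n)) /\
  (forall r, r \in R -> exists N (f : nat -> A),
       (forall m, (m < N)%N -> f m \in Rg m) /\ r = \sum_(m < N) f m) /\
  (forall N (f : nat -> A), (forall m, (m < N)%N -> f m \in Rg m) ->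
       \sum_(m < N) f m = 0 -> forall m, (m < N)%N -> f m = 0).

Definition mono n (x : 'I_n -> A) (al : 'I_n -> nat) : A :=
  \prod_(i < n) x i ^+ al i.

Definition left_free_basis n (R : {pred A}) (x : 'I_n -> A) : Prop :=
  (forall y : A, exists N (c : {ffun 'I_n -> 'I_N} -> A),
      (forall al, c al \in R) /\
      y = \sum_(al : {ffun 'I_n -> 'I_N}) c al * mono x (fun i => nat_of_ord (al i))) /\
  (forall N (c : {ffun 'I_n -> 'I_N} -> A), (forall al, c al \in R) ->
      \sum_(al : {ffun 'I_n -> 'I_N}) c al * mono x (fun i => nat_of_ord (al i)) = 0 ->
      forall al, c al = 0).

Definition lin_span n (R0 R1 : {pred A}) (x : 'I_n -> A) (y : A) : Prop :=
  exists (r0 : A) (r : 'I_n -> A),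
    [/\ r0 \in R0, forall i, r i \in R1 & y = r0 + \sum_(i < n) r i * x i].

Definition xpair (x1 x2 : A) : 'I_2 -> A :=
  fun i => if nat_of_ord i == 0%N then x1 else x2.

Definition skew_PBW n (R : {pred A}) (x : 'I_n -> A) : Prop :=
  [/\ left_free_basis R x,
      forall i r, r \in R -> r != 0 ->
        exists c, [/\ c \in R, c != 0 & x i * r - c * x i \in R] &
      forall i j, exists c,
        [/\ c \in R, c != 0 & lin_span R R x (x j * x i - c * x i * x j)]].

(* graded skew PBW extension of the N-graded R (grading Rg) in x:
   a bijective skew PBW extension (sigma_i bijective, c_{i,j} invertible in R)
   with sigma_i graded, delta_i(R_m) <= R_{m+1},
   x_j x_i - c_{i,j} x_i x_j in R_2 + R_1 x_1 + ... + R_1 x_n, c_{i,j} in R_0. *)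
Definition graded_skew_PBW n (R : {pred A}) (Rg : nat -> {pred A})
    (x : 'I_n -> A) : Prop :=
  is_grading R Rg /\
  left_free_basis R x /\
  (forall i r, r \in R -> r != 0 ->
     exists c, [/\ c \in R, c != 0 & x i * r - c * x i \in R]) /\
  (exists (sigma delta : 'I_n -> A -> A),
     (forall i r, r \in R ->
        [/\ sigma i r \in R, delta i r \in R & x i * r = sigma i r * x i + delta i r]) /\
     (forall i, {in R &, injective (sigma i)}) /\
     (forall i s, s \in R -> exists2 r, r \in R & sigma i r = s) /\
     (forall i m r, r \in Rg m -> sigma i r \in Rg m) /\
     (forall i m r, r \in Rg m -> delta i r \in Rg m.+1)) /\
  (exists c : 'I_n -> 'I_n -> A, forall i j,
     [/\ c i j \in R, c i j != 0,
         exists2 d, d \in R & c i j * d = 1 /\ d * c i j = 1,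
         lin_span R R x (x j * x i - c i j * x i * x j) &
         c i j \in Rg 0 /\ lin_span (Rg 2) (Rg 1) x (x j * x i - c i j * x i * x j)]).

Definition right_double_Ore (R : {pred A}) (x1 x2 : A) (p12 p11 : K)
    (t1 t2 t0 : A) (s11 s12 s21 s22 d1 d2 : A -> A) : Prop :=
  is_subalg R /\
  [/\ t1 \in R, t2 \in R & t0 \in R] /\
  x2 * x1 = p12 *: (x1 * x2) + p11 *: (x1 * x1) + t1 * x1 + t2 * x2 + t0 /\
  left_free_basis R (xpair x1 x2) /\
  (forall r, r \in R ->
     [/\ s11 r \in R, s12 r \in R, s21 r \in R & s22 r \in R] /\
     [/\ d1 r \in R, d2 r \in R,
         x1 * r = s11 r * x1 + s12 r * x2 + d1 r &
         x2 * r = s21 r * x1 + s22 r * x2 + d2 r]).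

(* graded: all relations homogeneous with deg x1 = deg x2 = 1 *)
Definition graded_right_double_Ore (R : {pred A}) (Rg : nat -> {pred A})
    (x1 x2 : A) (p12 p11 : K) (t1 t2 t0 : A) (s11 s12 s21 s22 d1 d2 : A -> A)
    : Prop :=
  right_double_Ore R x1 x2 p12 p11 t1 t2 t0 s11 s12 s21 s22 d1 d2 /\
  [/\ t1 \in Rg 1, t2 \in Rg 1 & t0 \in Rg 2] /\
  (forall m r, r \in Rg m ->
     [/\ s11 r \in Rg m, s12 r \in Rg m, s21 r \in Rg m & s22 r \in Rg m] /\
     d1 r \in Rg m.+1 /\ d2 r \in Rg m.+1).

Definition alg_aut_on (R : {pred A}) (f : A -> A) : Prop :=
  (forall r, r \in R -> f r \in R) /\
  {in R &, injective f} /\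
  (forall s, s \in R -> exists2 r, r \in R & f r = s) /\
  f 1 = 1 /\
  {in R &, forall a b, f (a + b) = f a + f b} /\
  {in R &, forall a b, f (a * b) = f a * f b} /\
  (forall (k : K) r, r \in R -> f (k *: r) = k *: f r).

End Defs.

From HB Require Import structures.
From mathcomp Require Import all_boot all_order all_algebra.
Set Implicit Arguments. Unset Strict Implicit. Unset Printing Implicit Defensive.
Import GRing.Theory.
Local Open Scope ring_scope.

(* Since sigma12 = sigma21 = 0, the double Ore commutation rules collapse to
   x_i r = sigma_ii(r) x_i + delta_i(r), the rules of a skew PBW extension with
   graded automorphisms sigma_ii and degree-raising delta_i. With p11 = 0 the
   defining relation reads x2 x1 - p12 x1 x2 = tau1 x1 + tau2 x2 + tau0, which lies
   in R_2 + R_1 x1 + R_1 x2, and the constants c_12 = p12, c_21 = p12^-1 are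
   invertible of degree 0, because 1 is homogeneous of degree 0 in any grading. *)

Definition ipair (T : Type) (a b : T) (i : 'I_2) : T :=
  if nat_of_ord i == 0%N then a else b.

Lemma ord2_ind (P : 'I_2 -> Prop) : P ord0 -> P ord_max -> forall i, P i.
Proof.
move=> P0 P1 [[|[|i]] lti] //.
- by have -> : Ordinal lti = ord0 by apply: val_inj.
- by have -> : Ordinal lti = ord_max by apply: val_inj.
Qed.

Section Grading.
Variables (K : fieldType) (A : algType K) (R : {pred A}) (Rg : nat -> {pred A}).
Hypothesis gradedR : is_grading R Rg.

Lemma grading0 m : 0 \in Rg m.
Proof. by case: gradedR => _ [zeroRg _]; apply: zeroRg. Qed.

Lemma gradingZ m : scaler_closed (Rg m).
Proof. by case: gradedR => _ [_ [_ [scaleRg _]]] k a; apply: scaleRg. Qed.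

Lemma gradingN m a : a \in Rg m -> - a \in Rg m.
Proof. by rewrite -scaleN1r; apply: gradingZ. Qed.

Lemma grading_components_unique N (f g : nat -> A) :
    (forall m, (m < N)%N -> f m \in Rg m) -> (forall m, (m < N)%N -> g m \in Rg m) ->
    \sum_(m < N) f m = \sum_(m < N) g m -> forall m, (m < N)%N -> f m = g m.
Proof.
case: gradedR => _ [_ [addRg [_ [_ [_ indepRg]]]]] Rf Rg_g fg m ltmN.
apply/eqP; rewrite -subr_eq0; apply/eqP.
apply: (indepRg N (fun m => f m - g m)) => //.
- by move=> k ltkN; apply: addRg; [exact: Rf | apply: gradingN; exact: Rg_g].
- by rewrite sumrB fg subrr.
Qed.

(* Compare [a] with [1 * a = \sum_m e m * a], whose degree-[n] component is [e 0 * a]. *)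
Lemma unit_component0_mul N (e : nat -> A) n a :
    (forall m, (m < N)%N -> e m \in Rg m) -> \sum_(m < N) e m = 1 ->
    a \in Rg n -> e 0%N * a = a.
Proof.
case: gradedR => _ [_ [_ [_ [mulRg _]]]] Re sum_e Rga.
pose F k := if k == n then a else 0.
pose G k := if (n <= k)%N then e (k - n)%N * a else 0.
have ltn_nN : (n < n + N)%N.
  rewrite -addn1 leq_add2l lt0n; apply: contra_eqN sum_e => /eqP->.
  by rewrite big_ord0 eq_sym oner_eq0.
have sumF : \sum_(k < n + N) F k = a.
  rewrite (bigD1 (Ordinal ltn_nN)) //= big1 ?addr0 => [|k nk]; first by rewrite /F eqxx.
  by rewrite /F ifN //; apply: contraNneq nk => kn; apply/eqP/val_inj.
have sumG : \sum_(k < n + N) G k = a.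
  rewrite -(big_mkord xpredT G) (big_cat_nat _ (leq_addr N n)) //= big1_seq; last first.
    by move=> k /andP[_]; rewrite mem_index_iota => /andP[_ ltkn]; rewrite /G leqNgt ltkn.
  rewrite add0r -{1}(add0n n) big_addn addKn big_mkord.
  under eq_bigr => k _ do rewrite /G leq_addl addnK.
  by rewrite -mulr_suml sum_e mul1r.
have := grading_components_unique (f := F) (g := G) _ _ (etrans sumF (esym sumG)) ltn_nN.
rewrite /F /G eqxx leqnn subnn => <- // k ltk.
- by case: eqP => [->|]; [| rewrite grading0].
- case: leqP => [lenk|]; last by rewrite grading0.
  rewrite -{2}(subnK lenk); apply: mulRg => //; apply: Re; rewrite ltn_subLR // addnC.
Qed.

Lemma grading1 : 1 \in R -> 1 \in Rg 0%N.
Proof.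
case: gradedR => _ [_ [_ [_ [_ [decR _]]]]] /decR[N [e [Re /esym sum_e]]].
have N_gt0 : (0 < N)%N.
  by rewrite lt0n; apply: contra_eqN sum_e => /eqP N0; rewrite N0 big_ord0 eq_sym oner_eq0.
suff <- : e 0%N = 1 by exact: Re.
rewrite -[LHS]mulr1 -[in LHS]sum_e mulr_sumr -[in RHS]sum_e.
by apply: eq_bigr => m _; apply: (unit_component0_mul Re sum_e (Re m _)).
Qed.

End Grading.

Section LinSpan.
Variables (K : fieldType) (A : algType K) (n : nat) (x : 'I_n -> A).

Lemma lin_span_subset (R0 R1 S0 S1 : {pred A}) y :
  {subset R0 <= S0} -> {subset R1 <= S1} -> lin_span R0 R1 x y -> lin_span S0 S1 x y.
Proof.
move=> sR0 sR1 [r0 [r [R0r0 R1r ->]]].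
by exists r0, r; split=> [|i|]; [apply: sR0 | apply: sR1 |].
Qed.

Lemma lin_spanZ (R0 R1 : {pred A}) k y : scaler_closed R0 -> scaler_closed R1 ->
  lin_span R0 R1 x y -> lin_span R0 R1 x (k *: y).
Proof.
move=> scR0 scR1 [r0 [r [R0r0 R1r ->]]].
exists (k *: r0), (fun i => k *: r i); split=> [|i|]; [exact: scR0 | exact: scR1 |].
by rewrite scalerDr scaler_sumr; under eq_bigr do rewrite scalerAl.
Qed.

End LinSpan.

Section TwoGenerators.
Variables (K : fieldType) (A : algType K) (R0 R1 : {pred A}) (u v : A).
Hypotheses (scR0 : scaler_closed R0) (scR1 : scaler_closed R1).

Definition comm_scalar (p : K) (i j : 'I_2) : K :=
  if (i < j)%N then p else if (j < i)%N then p^-1 else 1.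

Lemma comm_scalar_neq0 p i j : p != 0 -> comm_scalar p i j != 0.
Proof.
by move=> p_neq0; rewrite /comm_scalar; repeat case: ifP => _; rewrite ?invr_eq0 ?oner_eq0.
Qed.

Lemma lin_span_relation p t1 t2 t0 : t0 \in R0 -> t1 \in R1 -> t2 \in R1 ->
  v * u = p *: (u * v) + t1 * u + t2 * v + t0 ->
  lin_span R0 R1 (xpair u v) (v * u - p%:A * u * v).
Proof.
move=> R0t0 R1t1 R1t2 vu.
exists t0, (ipair t1 t2); split=> //; first by elim/ord2_ind.
rewrite big_ord_recl big_ord1 /= vu mulr_algl -scalerAl.
by rewrite [LHS]addrC !addrA addNr add0r [LHS]addrC addrA.
Qed.

Lemma lin_span_comm p : p != 0 ->
  lin_span R0 R1 (xpair u v) (v * u - p%:A * u * v) ->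
  forall i j, lin_span R0 R1 (xpair u v)
    (xpair u v j * xpair u v i - (comm_scalar p i j)%:A * xpair u v i * xpair u v j).
Proof.
move=> p_neq0 span_vu.
have span0 : lin_span R0 R1 (xpair u v) 0.
  by rewrite -(scale0r (v * u - p%:A * u * v)); apply: lin_spanZ.
elim/ord2_ind; elim/ord2_ind; rewrite /comm_scalar /xpair /= ?scale1r ?mul1r ?subrr //.
have -> : u * v - p^-1%:A * v * u = - p^-1 *: (v * u - p%:A * u * v).
  by rewrite !mulr_algl -!scalerAl scalerBr scalerA mulNr mulVf // scaleN1r opprK scaleNr addrC.
by apply: lin_spanZ.
Qed.

End TwoGenerators.

Section RightDoubleOre.
Variables (K : fieldType) (A : algType K) (R : {pred A}).

Lemma alg_aut_on_eq0 (f : A -> A) r :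
  0 \in R -> alg_aut_on R f -> r \in R -> (f r == 0) = (r == 0).
Proof.
move=> R0 [_ [f_inj [_ [_ [f_add _]]]]] Rr.
have f0 : f 0 = 0 by apply: (addrI (f 0)); rewrite -f_add // !addr0.
by apply/eqP/eqP => [fr0|->//]; apply: f_inj; rewrite ?fr0 ?f0.
Qed.

Lemma alg_scalar_unit (k : K) : k != 0 -> k%:A * k^-1%:A = 1 :> A /\ k^-1%:A * k%:A = 1 :> A.
Proof. by move=> k_neq0; rewrite !mulr_algl !scalerA mulfV // mulVf // scale1r. Qed.

Lemma right_double_Ore_diag x1 x2 p12 p11 t1 t2 t0 s11 s12 s21 s22 d1 d2 :
  right_double_Ore R x1 x2 p12 p11 t1 t2 t0 s11 s12 s21 s22 d1 d2 ->
  (forall r, r \in R -> s12 r = 0 /\ s21 r = 0) ->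
  forall i r, r \in R ->
    [/\ ipair s11 s22 i r \in R, ipair d1 d2 i r \in R &
        xpair x1 x2 i * r = ipair s11 s22 i r * xpair x1 x2 i + ipair d1 d2 i r].
Proof.
move=> [_ [_ [_ [_ maps]]]] offdiag; elim/ord2_ind => r Rr;
  have [[? ? ? ?] [? ? x1r x2r]] := maps r Rr; have [s12r s21r] := offdiag r Rr.
- by split=> //; rewrite x1r s12r mul0r addr0.
- by split=> //; rewrite x2r s21r mul0r add0r.
Qed.

End RightDoubleOre.

Theorem theorem3p5 (K : fieldType) (A : algType K) (R : {pred A})
    (Rg : nat -> {pred A}) (x1 x2 : A) (p12 p11 : K) (t1 t2 t0 : A)
    (s11 s12 s21 s22 d1 d2 : A -> A) :
  is_subalg R -> is_grading R Rg ->
  graded_right_double_Ore R Rg x1 x2 p12 p11 t1 t2 t0 s11 s12 s21 s22 d1 d2 ->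
  p11 = 0 -> p12 != 0 ->
  (forall r, r \in R -> s12 r = 0 /\ s21 r = 0) ->
  alg_aut_on R s11 -> alg_aut_on R s22 ->
  graded_skew_PBW R Rg (xpair x1 x2).
Proof.
move=> [alg_in_R _ _ _] gradedR [oreR [[Rgt1 Rgt2 Rgt0] Rg_maps]] p11_0 p12_neq0 offdiag.
move=> aut11 aut22.
have [_ [_ [rel [free _]]]] := oreR.
have R0 : (0 : A) \in R by rewrite -(scale0r 1); apply: alg_in_R.
have Rg0_1 : (1 : A) \in Rg 0%N by apply: grading1 gradedR _; rewrite -(scale1r 1).
have RgR : forall m, {subset Rg m <= R} by case: gradedR.
pose sigma := ipair s11 s22; pose delta := ipair d1 d2.
have x_comm := right_double_Ore_diag oreR offdiag.
have aut : forall i, alg_aut_on R (sigma i) by elim/ord2_ind.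
split=> //; split=> //; split.
  move=> i r Rr r_neq0; have [Rsr Rdr ->] := x_comm i r Rr.
  exists (sigma i r); split=> //; first by rewrite (alg_aut_on_eq0 R0 (aut i) Rr).
  by rewrite /sigma addrAC subrr add0r.
split.
  exists sigma, delta; split=> //; split; first by move=> i; have [_ []] := aut i.
  split; first by move=> i; have [_ [_ []]] := aut i.
  by split; elim/ord2_ind => m r /Rg_maps[[? ? ? ?] [? ?]].
rewrite p11_0 scale0r addr0 in rel.
have span := lin_span_comm (gradingZ gradedR (m := 2)) (gradingZ gradedR (m := 1)) p12_neq0
  (lin_span_relation Rgt0 Rgt1 Rgt2 rel).
exists (fun i j => (comm_scalar p12 i j)%:A) => i j.
have k_neq0 := comm_scalar_neq0 i j p12_neq0.
split=> //.
- by rewrite scaler_eq0 negb_or k_neq0 oner_neq0.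
- by exists (comm_scalar p12 i j)^-1%:A; last exact: alg_scalar_unit.
- exact: lin_span_subset (RgR 2) (RgR 1) (span i j).
- by split; [apply: (gradingZ gradedR) | apply: span].
Qed.
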